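(* In the free group $\mathbb{F}_2$ on $a,b$, set $a_0:=b^{-1}$, $b_0:=aba^{-1}$ and recursively $a_n:=a_{n-1}b_{n-1}$, $b_n:=a_{n-1}^{-1}b_{n-1}^{-1}$ for $n\ge1$. For $w\in\mathbb{F}_2$ let $\gamma(w):=\max\{m\mid w\in\gamma_m(\mathbb{F}_2)\}$. Then $\gamma(a_{n+2})\ge\gamma(a_{n+1})+\gamma(a_n)$ for all $n\in\mathbb{N}$. In particular, there exists a constant $C>0$ such that $\gamma(a_n)\ge C\cdot\varphi^n$ for all $n$, where $\varphi=\frac{1+\sqrt5}{2}$ is the golden ratio.
   Context: $\gamma_m(\mathbb{F}_2)$ denotes the $m$-th term of the lower central series: $\gamma_1(\mathbb{F}_2)=\mathbb{F}_2$, $\gamma_{m+1}(\mathbb{F}_2)=[\gamma_m(\mathbb{F}_2),\mathbb{F}_2]$. *)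

From mathcomp Require Import all_boot.
From Stdlib Require Import Reals.

Set Implicit Arguments.
Unset Strict Implicit.
Unset Printing Implicit Defensive.

(* A letter (g, e): g = false is a, g = true is b; e = true means inverse. *)
Definition letter := (bool * bool)%type.
Definition word := seq letter.

Definition flip (l : letter) : letter := (l.1, ~~ l.2).

Definition reduced (w : word) : bool := sorted (fun x y => y != flip x) w.

Definition push (l : letter) (w : word) : word :=
  match w with
  | y :: w' => if y == flip l then w' else l :: w
  | [::] => [:: l]
  end.

(* Group operations on reduced words: the elements of F_2. *)
Definition fone : word := [::].
Definition fmul (u v : word) : word := foldr push v u.
Definition finv (u : word) : word := rev (map flip u).
Definition fcomm (x y : word) : word :=
  fmul (finv x) (fmul (finv y) (fmul x y)).

Definition gen_a : word := [:: (false, false)].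
Definition gen_b : word := [:: (true, false)].

(** * Lower central series.
    [in_lcs m w] means w ∈ γ_m(F_2) (for m ≥ 1):
    γ_1 = F_2, and γ_{m+1} = the subgroup generated by the commutators
    [x, y] with x ∈ γ_m, y ∈ F_2. *)
Inductive in_lcs : nat -> word -> Prop :=
| lcs_base w : reduced w -> in_lcs 1 w
| lcs_comm m x y : in_lcs m x -> reduced y -> in_lcs m.+1 (fcomm x y)
| lcs_one m : in_lcs m.+1 fone
| lcs_mul m x y : in_lcs m.+1 x -> in_lcs m.+1 y -> in_lcs m.+1 (fmul x y)
| lcs_inv m x : in_lcs m.+1 x -> in_lcs m.+1 (finv x).

Fixpoint ab (n : nat) : word * word :=
  match n with
  | 0 => (finv gen_b, fmul gen_a (fmul gen_b (finv gen_a)))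
  | n'.+1 => let (x, y) := ab n' in (fmul x y, fmul (finv x) (finv y))
  end.

Definition a_seq (n : nat) : word := (ab n).1.
Definition b_seq (n : nat) : word := (ab n).2.

Definition phi : R := ((1 + sqrt 5) / 2)%R.

(* The recursion gives a_(n+2) = [a_(n+1)^-1, a_n], and [γ_i, γ_j] ⊆ γ_(i+j)
   (induction on the generation of γ_j, the commutator case being the
   Hall–Witt identity).  Hence γ(a_n) is at least the Fibonacci number
   F_(n+2) >= φ^n. *)
From mathcomp Require Import all_boot.
From Stdlib Require Import Reals Lra.

Set Implicit Arguments.
Unset Strict Implicit.
Unset Printing Implicit Defensive.

Lemma flipK : involutive flip.
Proof. by case=> g e; rewrite /flip /= negbK. Qed.

Lemma push_reduced l w : reduced w -> reduced (push l w).
Proof.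
case: w => [|y w] //= Hw; case: ifP => [_|Hy]; last by rewrite /= Hy Hw.
by case: w Hw => //= z w /andP[].
Qed.

Lemma fmul_reduced u v : reduced v -> reduced (fmul u v).
Proof. by elim: u => //= l u IHu Hv; apply/push_reduced/IHu. Qed.

Lemma finv_reduced u : reduced u -> reduced (finv u).
Proof.
rewrite /reduced /finv rev_sorted sorted_map; case: u => //= x s.
rewrite (@eq_path _ _ (fun y z : letter => z != flip y)) // => y z /=.
by rewrite /relpre flipK eq_sym.
Qed.

Lemma pushK l w : reduced w -> push l (push (flip l) w) = w.
Proof.
case: w => [|y w] /=; first by rewrite eqxx.
rewrite flipK; case: ifP => [/eqP -> | _ _]; last by rewrite /= eqxx.
by case: w => [|z w] //= /andP[/negbTE ->].
Qed.

Lemma fmul_push l v w : reduced w -> fmul (push l v) w = push l (fmul v w).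
Proof.
move=> Hw; case: v => [|y v] //=; case: ifP => // /eqP ->.
by rewrite pushK // fmul_reduced.
Qed.

Lemma fmulA u v w : reduced w -> fmul (fmul u v) w = fmul u (fmul v w).
Proof. by move=> Hw; elim: u => //= l u IHu; rewrite fmul_push // IHu. Qed.

Lemma fmulw1 u : reduced u -> fmul u fone = u.
Proof.
elim: u => //= l u IHu Hlu.
have Hu : reduced u by case: u Hlu {IHu} => //= y u /andP[].
by rewrite IHu //; case: u Hlu {IHu Hu} => //= y u /andP[/negbTE ->].
Qed.

Lemma finvK : involutive finv.
Proof. by move=> u; rewrite /finv map_rev revK -map_comp (eq_map flipK) map_id. Qed.

Lemma fmulVw u : fmul (finv u) u = fone.
Proof.
elim: u => //= l u IHu.
by rewrite /finv /= rev_cons -cats1 /fmul foldr_cat /= flipK eqxx.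
Qed.

Lemma fmulwV u : fmul u (finv u) = fone.
Proof. by rewrite -{1}(finvK u) fmulVw. Qed.

Lemma finvM u v : reduced u -> reduced v ->
  finv (fmul u v) = fmul (finv v) (finv u).
Proof.
move=> Hu Hv; have Hvu : reduced (fmul (finv v) (finv u)).
  exact/fmul_reduced/finv_reduced.
have Vuv : fmul (fmul (finv v) (finv u)) (fmul u v) = fone.
  by rewrite fmulA ?fmul_reduced // -(fmulA (finv u)) // fmulVw fmulVw.
by rewrite -[finv _]/(fmul fone _) -Vuv fmulA ?finv_reduced ?fmul_reduced //
  fmulwV fmulw1.
Qed.

(* Identities between products of arbitrary reduced words are decided by
   reflection: a formal group expression is flattened into a word over signed
   variables, which is then freely reduced. *)
Section WordProblem.

Variable env : nat -> word.
Hypothesis env_reduced : forall i, reduced (env i).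

Inductive gexpr := GVar of nat | GInv of gexpr | GMul of gexpr & gexpr | GOne.

Fixpoint gexpr_eval (t : gexpr) : word :=
  match t with
  | GVar i => env i
  | GInv t => finv (gexpr_eval t)
  | GMul t1 t2 => fmul (gexpr_eval t1) (gexpr_eval t2)
  | GOne => fone
  end.

Definition sletter := (nat * bool)%type.
Definition sflip (p : sletter) : sletter := (p.1, ~~ p.2).
Definition sinv (s : seq sletter) := rev (map sflip s).

Fixpoint gexpr_flatten (t : gexpr) : seq sletter :=
  match t with
  | GVar i => [:: (i, false)]
  | GInv t => sinv (gexpr_flatten t)
  | GMul t1 t2 => gexpr_flatten t1 ++ gexpr_flatten t2
  | GOne => [::]
  end.

Definition spush (p : sletter) (s : seq sletter) :=
  if s is q :: s' then (if q == sflip p then s' else p :: s) else [:: p].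

Definition sreduce (s : seq sletter) := foldr spush [::] s.

Definition sletter_eval (p : sletter) : word :=
  if p.2 then finv (env p.1) else env p.1.

Definition sword_eval (s : seq sletter) : word :=
  foldr (fun p w => fmul (sletter_eval p) w) fone s.

Lemma sletter_eval_reduced p : reduced (sletter_eval p).
Proof. by rewrite /sletter_eval; case: ifP => _; rewrite ?finv_reduced. Qed.

Lemma sletter_eval_flip p : sletter_eval (sflip p) = finv (sletter_eval p).
Proof. by case: p => i []; rewrite /sletter_eval /= ?finvK. Qed.

Lemma sword_eval_reduced s : reduced (sword_eval s).
Proof. by elim: s => //= p s IHs; apply: fmul_reduced. Qed.

Lemma sword_eval_cat s1 s2 :
  sword_eval (s1 ++ s2) = fmul (sword_eval s1) (sword_eval s2).
Proof. by elim: s1 => //= p s IHs; rewrite IHs fmulA ?sword_eval_reduced. Qed.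

Lemma sword_eval_inv s : sword_eval (sinv s) = finv (sword_eval s).
Proof.
elim: s => //= p s IHs.
rewrite /sinv /= rev_cons -cats1 sword_eval_cat -/(sinv s) IHs /=.
rewrite sletter_eval_flip fmulw1 ?finv_reduced ?sletter_eval_reduced //.
by rewrite finvM ?sletter_eval_reduced ?sword_eval_reduced.
Qed.

Lemma gexpr_eval_flatten t : gexpr_eval t = sword_eval (gexpr_flatten t).
Proof.
elim: t => [i|t IHt|t1 IHt1 t2 IHt2|] //=.
- by rewrite fmulw1 ?env_reduced.
- by rewrite sword_eval_inv IHt.
- by rewrite sword_eval_cat IHt1 IHt2.
Qed.

Lemma sword_eval_sreduce s : sword_eval (sreduce s) = sword_eval s.
Proof.
elim: s => //= p s <-; case: (sreduce s) => //= q s'.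
case: ifP => // /eqP ->.
by rewrite sletter_eval_flip -fmulA ?sword_eval_reduced // fmulwV.
Qed.

Lemma gexpr_eval_eq t1 t2 :
  sreduce (gexpr_flatten t1) = sreduce (gexpr_flatten t2) ->
  gexpr_eval t1 = gexpr_eval t2.
Proof.
by move=> E; rewrite !gexpr_eval_flatten -sword_eval_sreduce E sword_eval_sreduce.
Qed.

End WordProblem.

Lemma nth_reduced (s : seq word) : all reduced s -> forall i, reduced (nth fone s i).
Proof.
move=> Hs i; case: (ltnP i (size s)) => [/(mem_nth fone) | /(nth_default fone) ->//].
exact: (allP Hs).
Qed.

Ltac word_identity s t1 t2 :=
  move=> *;
  apply: (@gexpr_eval_eq (nth fone s) (@nth_reduced s _) t1 t2);
  [rewrite /=; repeat (apply/andP; split); done | by vm_compute].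

Definition fconj g w := fmul (finv g) (fmul w g).

Definition gcomm a b := GMul (GInv a) (GMul (GInv b) (GMul a b)).
Definition gconj g w := GMul (GInv g) (GMul w g).

Lemma fconjE w g : reduced w -> reduced g -> fconj g w = fmul w (fcomm w g).
Proof.
word_identity [:: w; g] (gconj (GVar 1) (GVar 0))
  (GMul (GVar 0) (gcomm (GVar 0) (GVar 1))).
Qed.

Lemma finv_fcomm x y : reduced x -> reduced y -> finv (fcomm y x) = fcomm x y.
Proof.
word_identity [:: x; y] (GInv (gcomm (GVar 1) (GVar 0))) (gcomm (GVar 0) (GVar 1)).
Qed.

Lemma fcommw1 x : reduced x -> fcomm x fone = fone.
Proof. word_identity [:: x] (gcomm (GVar 0) GOne) GOne. Qed.

Lemma fcommM x u v : reduced x -> reduced u -> reduced v ->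
  fcomm x (fmul u v) = fmul (fcomm x v) (fconj v (fcomm x u)).
Proof.
word_identity [:: x; u; v] (gcomm (GVar 0) (GMul (GVar 1) (GVar 2)))
  (GMul (gcomm (GVar 0) (GVar 2)) (gconj (GVar 2) (gcomm (GVar 0) (GVar 1)))).
Qed.

Lemma fcommV x u : reduced x -> reduced u ->
  fcomm x (finv u) = finv (fconj (finv u) (fcomm x u)).
Proof.
word_identity [:: x; u] (gcomm (GVar 0) (GInv (GVar 1)))
  (GInv (gconj (GInv (GVar 1)) (gcomm (GVar 0) (GVar 1)))).
Qed.

Lemma fcomm_hall_witt x y z : reduced x -> reduced y -> reduced z ->
  fcomm x (fcomm y z) =
  fconj z (fmul (fconj x (fcomm (fcomm (finv z) (finv x)) y))
                (fconj y (fcomm (fcomm x (finv y)) (finv z)))).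
Proof.
word_identity [:: x; y; z] (gcomm (GVar 0) (gcomm (GVar 1) (GVar 2)))
  (gconj (GVar 2)
     (GMul (gconj (GVar 0) (gcomm (gcomm (GInv (GVar 2)) (GInv (GVar 0))) (GVar 1)))
           (gconj (GVar 1) (gcomm (gcomm (GVar 0) (GInv (GVar 1))) (GInv (GVar 2)))))).
Qed.

Lemma fmul_fcomm x y : reduced x -> reduced y ->
  fmul (fmul x y) (fmul (finv x) (finv y)) = fcomm (finv (fmul x y)) x.
Proof.
word_identity [:: x; y] (GMul (GMul (GVar 0) (GVar 1)) (GMul (GInv (GVar 0)) (GInv (GVar 1))))
  (gcomm (GInv (GMul (GVar 0) (GVar 1))) (GVar 0)).
Qed.

Lemma fcomm_reduced x y : reduced y -> reduced (fcomm x y).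
Proof. by move=> Hy; rewrite /fcomm !fmul_reduced. Qed.

Lemma in_lcs_reduced m w : in_lcs m w -> reduced w.
Proof.
elim=> {m w} // [m x y _ _ Hy | m x y _ Hx _ Hy | m x _ Hx].
- exact: fcomm_reduced.
- exact: fmul_reduced.
- exact: finv_reduced.
Qed.

Lemma in_lcs_gt0 m w : in_lcs m w -> 0 < m.
Proof. by case. Qed.

Lemma in_lcs_le k j w : in_lcs k w -> 0 < j <= k -> in_lcs j w.
Proof.
move=> Hw; elim: Hw j => {k w}.
- by move=> w Hw [|[|j]] // _; apply: lcs_base.
- move=> m x y Hx IHx Hy [//|[|j]] /andP[_ Hj].
    exact/lcs_base/fcomm_reduced.
  exact/lcs_comm/Hy/IHx.
- by move=> m [//|j] _; apply: lcs_one.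
- by move=> m x y _ IHx _ IHy [//|j] Hj; apply: lcs_mul; [apply: IHx | apply: IHy].
- by move=> m x _ IHx [//|j] Hj; apply/lcs_inv/IHx.
Qed.

Lemma in_lcsV k w : in_lcs k w -> in_lcs k (finv w).
Proof. by case: k => [/in_lcs_gt0 // | k]; apply: lcs_inv. Qed.

Lemma in_lcsJ k w g : in_lcs k w -> reduced g -> in_lcs k (fconj g w).
Proof.
move=> Hw Hg; rewrite fconjE ?(in_lcs_reduced Hw) //.
case: k Hw => [/in_lcs_gt0 // | k] Hw.
by apply: lcs_mul => //; apply: (in_lcs_le (lcs_comm Hw Hg)); rewrite /= ltnW.
Qed.

(* Hall–Witt writes [x, [y, z]] as a product of conjugates of
   [[z^-1, x^-1], y] and [[x, y^-1], z^-1]; since [z^-1, x^-1] ∈ γ_(i+1) and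
   [x, y^-1] ∈ γ_(i+m), both lie in γ_(i+m+1). *)
Lemma in_lcsR_comm m y z :
    (forall i x, in_lcs i x -> in_lcs (i + m) (fcomm x y)) ->
    in_lcs m y -> reduced z ->
  forall i x, in_lcs i x -> in_lcs (i + m.+1) (fcomm x (fcomm y z)).
Proof.
move=> IHy Hy Hz i x Hx.
have [Rx Ry] := (in_lcs_reduced Hx, in_lcs_reduced Hy).
have Rzi : reduced (finv z) by exact: finv_reduced.
rewrite fcomm_hall_witt // addnS; apply: in_lcsJ => //.
apply: lcs_mul; apply: in_lcsJ => //.
- have Hzx : in_lcs i.+1 (fcomm (finv z) (finv x)).
    by rewrite -finv_fcomm ?finv_reduced //; apply/lcs_inv/lcs_comm/Rzi/in_lcsV.
  by rewrite -addSn; apply: IHy.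
- apply: lcs_comm Rzi; rewrite fcommV //.
  by apply/in_lcsV/in_lcsJ; [apply: IHy | exact: finv_reduced].
Qed.

Lemma in_lcsR i j x y :
  in_lcs i x -> in_lcs j y -> in_lcs (i + j) (fcomm x y).
Proof.
move=> Hx Hy; elim: Hy i x Hx => {j y}.
- by move=> y Hy i x Hx; rewrite addn1; apply: lcs_comm.
- by move=> m y z Hy IHy Hz; apply: in_lcsR_comm.
- by move=> m i x Hx; rewrite fcommw1 ?(in_lcs_reduced Hx) // addnS; apply: lcs_one.
- move=> m u v Hu IHu Hv IHv i x Hx.
  have [[Rx Ru] Rv] := (in_lcs_reduced Hx, in_lcs_reduced Hu, in_lcs_reduced Hv).
  rewrite fcommM //; have := IHu _ _ Hx; have := IHv _ _ Hx; rewrite addnS => Hxv Hxu.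
  by apply: lcs_mul => //; apply: in_lcsJ.
- move=> m u Hu IHu i x Hx.
  have [Rx Ru] := (in_lcs_reduced Hx, in_lcs_reduced Hu).
  by rewrite fcommV //; apply/in_lcsV/in_lcsJ; [apply: IHu | exact: finv_reduced].
Qed.

Lemma a_seqS n : a_seq n.+1 = fmul (a_seq n) (b_seq n).
Proof. by rewrite /a_seq /b_seq /=; case: (ab n). Qed.

Lemma b_seqS n : b_seq n.+1 = fmul (finv (a_seq n)) (finv (b_seq n)).
Proof. by rewrite /a_seq /b_seq /=; case: (ab n). Qed.

Lemma ab_seq_reduced n : reduced (a_seq n) /\ reduced (b_seq n).
Proof.
elim: n => [|n [Ha Hb]]; first by [].
by rewrite a_seqS b_seqS !fmul_reduced // finv_reduced.
Qed.

Lemma a_seqSS n : a_seq n.+2 = fcomm (finv (a_seq n.+1)) (a_seq n).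
Proof.
have [Ha Hb] := ab_seq_reduced n.
by rewrite a_seqS b_seqS a_seqS fmul_fcomm.
Qed.

Lemma in_lcs_a_seqSS n m1 m2 : in_lcs m1 (a_seq n.+1) -> in_lcs m2 (a_seq n) ->
  in_lcs (m1 + m2) (a_seq n.+2).
Proof. by move=> H1 H2; rewrite a_seqSS; apply/in_lcsR/H2/in_lcsV. Qed.

Fixpoint fib (n : nat) : nat :=
  if n is (n'.+1 as n1).+1 then fib n1 + fib n' else n.

Lemma fibSS n : fib n.+2 = fib n.+1 + fib n.
Proof. by []. Qed.

Lemma in_lcs_a_seq_fib n : in_lcs (fib n.+2) (a_seq n).
Proof.
suff: in_lcs (fib n.+2) (a_seq n) /\ in_lcs (fib n.+3) (a_seq n.+1) by case.
elim: n => [|n [IH0 IH1]]; last by split=> //; rewrite fibSS; apply: in_lcs_a_seqSS.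
split; first exact: lcs_base.
have -> : a_seq 1 = fcomm gen_b (finv gen_a) by [].
exact: lcs_comm (lcs_base _) _.
Qed.

Open Scope R_scope.

Lemma phi_sqr : phi * phi = phi + 1.
Proof. by have := sqrt_sqrt 5 ltac:(lra); rewrite /phi; nra. Qed.

Lemma phi_pow_le_fib n : phi ^ n <= INR (fib n.+2).
Proof.
have [sqrt5_sq sqrt5_ge0] := (sqrt_sqrt 5 ltac:(lra), sqrt_pos 5).
suff: phi ^ n <= INR (fib n.+2) /\ phi ^ n.+1 <= INR (fib n.+3) by case.
elim: n => [|n [IH0 IH1]]; first by rewrite /phi /=; split; nra.
split=> //; rewrite fibSS plus_INR.
have -> : phi ^ n.+2 = phi ^ n.+1 + phi ^ n by rewrite /= -Rmult_assoc phi_sqr; ring.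
lra.
Qed.

Close Scope R_scope.

Theorem lemma2p5 :
  (forall n m1 m2 : nat,
      in_lcs m1 (a_seq n.+1) -> in_lcs m2 (a_seq n) ->
      in_lcs (m1 + m2) (a_seq n.+2))
  /\
  (exists C : R, (0 < C)%R /\
     forall n m : nat, (1 <= m)%N -> (INR m <= C * phi ^ n)%R ->
       in_lcs m (a_seq n)).
Proof.
split; first exact: in_lcs_a_seqSS.
exists 1%R; split=> [|n m m_gt0 m_le]; first lra.
have m_le_fib : (m <= fib n.+2)%N.
  by apply/leP/INR_le; have := phi_pow_le_fib n; lra.
by apply: (in_lcs_le (in_lcs_a_seq_fib n)); rewrite m_gt0 m_le_fib.
Qed.
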